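(* Let $H$ be a function with domain $\omega$ such that each $H(n)$ is a finite set with at least two elements. If $\mathcal U\in V$ is a P-point ultrafilter on $\omega$, then $\Vdash_{PT_H}$ ''$\mathcal U$ generates an ultrafilter'', i.e. in the extension, for every $x\subseteq\omega$ there is $u\in\mathcal U$ with $u\subseteq x$ or $u\subseteq\omega\setminus x$.
   Context: An ultrafilter $\mathcal U$ on $\omega$ is a P-point if for every sequence $\langle A_n:n<\omega\rangle$ of members of $\mathcal U$ there is $A\in\mathcal U$ with $A\setminus A_n$ finite for all $n$. $PT_H$ is the set of all $p$ such that (A) $p$ is a nonempty set of finite sequences closed under initial segments; (B) $\eta(l)\in H(l)$ for $\eta\in p$, $l<|\eta|$; (C) for $\eta\in p$, $\mathrm{succ}_p(\eta)=\{i:\eta^\frown i\in p\}$ is a singleton or equals $H(|\eta|)$; (D) every $\eta\in p$ has an extension $\nu\in p$ with $\mathrm{succ}_p(\nu)=H(|\nu|)$. $q$ is stronger than $p$ iff $q\subseteq p$. *)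

(* plain Prop-valued sets.  Forcing is rendered combinatorially
   through nice names. *)
From Stdlib Require Import List Arith.
Import ListNotations.

Definition nset := nat -> Prop.

Definition almost_sub (A B : nset) : Prop :=
  exists m, forall k, m <= k -> A k -> B k.

Definition ultrafilter (U : nset -> Prop) : Prop :=
  (forall A B : nset, U A -> (forall k, A k -> B k) -> U B) /\
  (forall A B : nset, U A -> U B -> U (fun k => A k /\ B k)) /\
  ~ U (fun _ => False) /\
  (forall A : nset, U A \/ U (fun k => ~ A k)).

Definition P_point (U : nset -> Prop) : Prop :=
  ultrafilter U /\
  forall As : nat -> nset, (forall n, U (As n)) ->
    exists A, U A /\ forall n, almost_sub A (As n).

Definition finite_set {T : Type} (S : T -> Prop) : Prop :=
  exists l : list T, forall x, S x <-> In x l.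

Definition good_H {T : Type} (H : nat -> T -> Prop) : Prop :=
  forall n, finite_set (H n) /\ exists x y, x <> y /\ H n x /\ H n y.

Definition full_split {T : Type} (H : nat -> T -> Prop) (p : list T -> Prop)
  (eta : list T) : Prop :=
  forall i, p (eta ++ [i]) <-> H (length eta) i.

Definition PT {T : Type} (H : nat -> T -> Prop) (p : list T -> Prop) : Prop :=
  (exists eta, p eta) /\
  (forall eta nu, p (eta ++ nu) -> p eta) /\
  (forall eta, p eta -> forall l x, nth_error eta l = Some x -> H l x) /\
  (forall eta, p eta ->
     (exists i, p (eta ++ [i]) /\ forall j, p (eta ++ [j]) -> j = i)
     \/ full_split H p eta) /\
  (forall eta, p eta -> exists nu, p (eta ++ nu) /\ full_split H p (eta ++ nu)).

Definition stronger {T : Type} (q p : list T -> Prop) : Prop :=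
  forall eta, q eta -> p eta.

Definition compatible {T : Type} (H : nat -> T -> Prop) (q r : list T -> Prop) : Prop :=
  exists s, PT H s /\ stronger s q /\ stronger s r.

(* A nice PT_H-name for a subset of omega: a set X of pairs (n, r) with r a
   condition; its interpretation by a generic G is {n | exists r in G, X n r}. *)
Definition nice_name {T : Type} (H : nat -> T -> Prop) (X : nat -> (list T -> Prop) -> Prop) : Prop :=
  forall n r, X n r -> PT H r.

Definition forces_in {T : Type} (H : nat -> T -> Prop) (q : list T -> Prop)
  (X : nat -> (list T -> Prop) -> Prop) (n : nat) : Prop :=
  forall q', PT H q' -> stronger q' q -> exists r, X n r /\ compatible H q' r.

Definition forces_notin {T : Type} (H : nat -> T -> Prop) (q : list T -> Prop)
  (X : nat -> (list T -> Prop) -> Prop) (n : nat) : Prop :=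
  forall r, X n r -> ~ compatible H q r.

(* Call r t-good (t = true for "n ∈ X", false for "n ∉ X") if some W ∈ U is such that
   for every N an extension of r forces the t-literal for all n < N in W.  Deciding
   "n ∈ X" along a decreasing sequence and letting U pick the majority answer shows that
   every condition is true-good or false-good, so below some p0 ≤ p every condition is
   t-good for one fixed t.  Since the levels of a PT_H tree are finite, gluing witnesses
   over the nodes of level L turns this into a fusion step from (q, L) that comes with a
   set W(q, L) ∈ U.  The P-point gives A ∈ U almost contained in W(q, L) for every state
   reachable by finitely many fusion steps.  Running two fusion sequences whose cut-offs
   alternate above each other's thresholds, the intervals between cut-offs cover
   A ∩ W(p0, 0), so U contains the set handled by one of the two sequences, and its
   fusion limit is the required q. *)

From Stdlib Require Import List Arith Lia Classical ClassicalChoice.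
From Stdlib Require Cantor.
Import ListNotations.

Definition is_prefix {T : Type} (a b : list T) : Prop := exists d, b = a ++ d.

Lemma is_prefix_refl {T : Type} (a : list T) : is_prefix a a.
Proof. exists []. now rewrite app_nil_r. Qed.

Lemma is_prefix_app {T : Type} (a d : list T) : is_prefix a (a ++ d).
Proof. now exists d. Qed.

Lemma is_prefix_trans {T : Type} (a b c : list T) :
  is_prefix a b -> is_prefix b c -> is_prefix a c.
Proof. intros [d1 ->] [d2 ->]. exists (d1 ++ d2). now rewrite app_assoc. Qed.

Lemma is_prefix_length {T : Type} (a b : list T) : is_prefix a b -> length a <= length b.
Proof. intros [d ->]. rewrite length_app. lia. Qed.

Lemma is_prefix_length_eq {T : Type} (a b : list T) :
  is_prefix a b -> length b <= length a -> a = b.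
Proof.
  intros [[|x d] ->] Hl; rewrite ?app_nil_r; [easy|].
  rewrite length_app in Hl. simpl in Hl. lia.
Qed.

Lemma is_prefix_common {T : Type} (a b c : list T) :
  is_prefix a c -> is_prefix b c -> is_prefix a b \/ is_prefix b a.
Proof.
  intros [d1 ->] [d2 E]. apply app_eq_app in E as [l [[-> _]|[-> _]]].
  - right. apply is_prefix_app.
  - left. apply is_prefix_app.
Qed.

Lemma is_prefix_firstn {T : Type} (a b : list T) : is_prefix a b -> firstn (length a) b = a.
Proof. intros [d ->]. now rewrite firstn_app, Nat.sub_diag, firstn_all, app_nil_r. Qed.

Lemma firstn_is_prefix {T : Type} (n : nat) (b : list T) : is_prefix (firstn n b) b.
Proof. exists (skipn n b). now rewrite firstn_skipn. Qed.

Lemma firstn_app_short {T : Type} (L : nat) (v w : list T) :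
  L <= length v -> firstn L (v ++ w) = firstn L v.
Proof. intros Hl. rewrite firstn_app. replace (L - length v) with 0 by lia. apply app_nil_r. Qed.

Lemma comparable_succ {T : Type} (m d : list T) (a j : T) :
  is_prefix (m ++ [j]) (m ++ a :: d) \/ is_prefix (m ++ a :: d) (m ++ [j]) -> j = a.
Proof.
  intros [[f Hf]|[f Hf]]; rewrite <- app_assoc in Hf; apply app_inv_head in Hf;
    now inversion Hf.
Qed.

Lemma stronger_trans {T : Type} (q1 q2 q3 : list T -> Prop) :
  stronger q1 q2 -> stronger q2 q3 -> stronger q1 q3.
Proof. intros S12 S23 e He. auto. Qed.

Definition subtree {T : Type} (q : list T -> Prop) (e : list T) : list T -> Prop :=
  fun m => q m /\ (is_prefix m e \/ is_prefix e m).

Lemma subtree_stronger {T : Type} (q : list T -> Prop) e : stronger (subtree q e) q.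
Proof. now intros m [Hm _]. Qed.

Lemma subtree_mono {T : Type} (q1 q2 : list T -> Prop) e :
  stronger q1 q2 -> stronger (subtree q1 e) (subtree q2 e).
Proof. intros S m [Hm C]. split; auto. Qed.

Section PT_trees.

Context {T : Type} (H : nat -> T -> Prop).
Hypothesis goodH : good_H H.

Lemma PT_nil (r : list T -> Prop) : PT H r -> r [].
Proof. intros [[e He] [Hc _]]. exact (Hc [] e He). Qed.

Lemma PT_prefix_closed (r : list T -> Prop) a b : PT H r -> r b -> is_prefix a b -> r a.
Proof. intros [_ [Hc _]] Hb [d ->]. exact (Hc a d Hb). Qed.

Lemma PT_succ (r : list T -> Prop) e : PT H r -> r e -> exists i, r (e ++ [i]).
Proof.
  intros (_ & _ & _ & HC & _) He. destruct (HC e He) as [[i [Hi _]]|Hf]; [eauto|].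
  destruct (goodH (length e)) as [_ [x [_ [_ [Hx _]]]]]. exists x. now apply Hf.
Qed.

Lemma PT_extend (r : list T -> Prop) e : PT H r -> r e ->
  forall k, exists d, r (e ++ d) /\ length d = k.
Proof.
  intros P He k. induction k as [|k [d [Hd Hl]]].
  - exists []. now rewrite app_nil_r.
  - destruct (PT_succ r _ P Hd) as [i Hi]. exists (d ++ [i]).
    rewrite app_assoc, length_app. simpl. split; [easy|lia].
Qed.

Lemma PT_level (r : list T -> Prop) k : PT H r -> exists e, r e /\ length e = k.
Proof. intros P. exact (PT_extend r [] P (PT_nil r P) k). Qed.

Lemma PT_firstn (r : list T -> Prop) n v : PT H r -> r v -> r (firstn n v).
Proof. intros P Hv. eapply PT_prefix_closed; [exact P|exact Hv|apply firstn_is_prefix]. Qed.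

Lemma PT_below_subtree_contains (q r : list T -> Prop) e :
  PT H r -> stronger r (subtree q e) -> r e.
Proof.
  intros P S. destruct (PT_level r (length e) P) as [m [Hm HL]].
  destruct (S m Hm) as [_ [C|C]]; apply is_prefix_length_eq in C; try lia; now subst.
Qed.

Lemma subtree_PT (q : list T -> Prop) e : PT H q -> q e -> PT H (subtree q e).
Proof.
  intros P He. pose proof P as (_ & HCl & HB & HC & HD).
  split; [|split; [|split; [|split]]].
  - exists e. split; [easy|]. left. apply is_prefix_refl.
  - intros a b [Hab Hc]. split; [eapply HCl; eauto|].
    destruct Hc as [Hc|Hc].
    + left. eapply is_prefix_trans; [apply is_prefix_app|exact Hc].
    + apply (is_prefix_common a e (a ++ b)); auto. apply is_prefix_app.
  - intros a [Ha _]. eauto.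
  - intros m [Hm [[[|a d] Hd]|Hem]].
    + rewrite app_nil_r in Hd. subst e.
      destruct (HC m Hm) as [[i [Hi Hu]]|Hf].
      * left. exists i. split; [split; [easy|right; apply is_prefix_app]|].
        intros j [Hj _]. auto.
      * right. intros i. split; [intros [Hi _]; now apply Hf|].
        intros Hi. split; [now apply Hf|right; apply is_prefix_app].
    + subst e. left. exists a. split.
      * split; [|left; exists d; now rewrite <- app_assoc].
        apply (PT_prefix_closed q _ (m ++ a :: d)); auto. exists d. now rewrite <- app_assoc.
      * intros j [_ Cj]. eapply comparable_succ; eauto.
    + assert (Hs : forall i, subtree q e (m ++ [i]) <-> q (m ++ [i])).
      { intros i; split; [now intros [? _]|]. intros Hi. split; [easy|].
        right. eapply is_prefix_trans; [exact Hem|apply is_prefix_app]. }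
      destruct (HC m Hm) as [[i [Hi Hu]]|Hf].
      * left. exists i. split; [exact (proj2 (Hs i) Hi)|].
        intros j Hj. exact (Hu j (proj1 (Hs j) Hj)).
      * right. intros i. rewrite Hs. apply Hf.
  - intros m [Hm Cm].
    assert (exists m', q m' /\ is_prefix e m' /\ is_prefix m m') as [m' [Hm' [Em' [f ->]]]].
    { destruct Cm as [C|C]; [exists e|exists m]; repeat split; auto using is_prefix_refl. }
    destruct (HD _ Hm') as [nu [Hn Hf]].
    exists (f ++ nu). rewrite app_assoc. split.
    + split; [easy|]. right. eapply is_prefix_trans; [exact Em'|apply is_prefix_app].
    + intros i. rewrite <- (Hf i). split; [now intros [? _]|]. intros Hi. split; [easy|].
      right. eapply is_prefix_trans; [exact Em'|]. exists (nu ++ [i]). now rewrite <- !app_assoc.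
Qed.

End PT_trees.

Section Ultrafilters.

Variable U : nset -> Prop.
Hypothesis HU : ultrafilter U.

Lemma ultrafilter_full : U (fun _ => True).
Proof.
  destruct HU as [Hup [_ [_ Hu]]].
  destruct (Hu (fun _ => True)) as [A|A]; [easy|]. eapply Hup; [exact A|]. easy.
Qed.

Lemma ultrafilter_finite_meet {A : Type} (P : A -> Prop) (W : A -> nset) :
  (forall a, P a -> U (W a)) ->
  forall l, U (fun n => forall a, In a l -> P a -> W a n).
Proof.
  intros HW l. pose proof HU as [Hup [Hint _]]. induction l as [|a l IH].
  - eapply Hup; [apply ultrafilter_full|]. intros k _ e [].
  - destruct (classic (P a)) as [Pa|Pa].
    + eapply Hup; [apply (Hint _ _ (HW a Pa) IH)|].
      intros k [H1 H2] e [<-|Ie] Pe; auto.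
    + eapply Hup; [exact IH|]. intros k Hk e [<-|Ie] Pe; [contradiction|auto].
Qed.

End Ultrafilters.

Lemma list_bound {A : Type} (P : A -> Prop) (Q : A -> nat -> Prop) :
  (forall a, P a -> exists m, Q a m) ->
  forall l, exists M, forall a, In a l -> P a -> exists m, m < M /\ Q a m.
Proof.
  intros HQ l. induction l as [|a l [M IH]].
  - exists 0. intros a [].
  - destruct (classic (P a)) as [Pa|Pa].
    + destruct (HQ a Pa) as [m Hm]. exists (S (m + M)). intros b [<-|Ib] Pb.
      * exists m. split; [lia|easy].
      * destruct (IH b Ib Pb) as [m' [H1 H2]]. exists m'. split; [lia|easy].
    + exists M. intros b [<-|Ib] Pb; [contradiction|auto].
Qed.

Section Levels.

Context {T : Type} (H : nat -> T -> Prop).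
Hypothesis goodH : good_H H.

Lemma H_sequences_finite L s : exists l : list (list T), forall e,
  length e = L -> (forall i x, nth_error e i = Some x -> H (s + i) x) -> In e l.
Proof.
  revert s. induction L as [|L IH]; intros s.
  - exists [[]]. intros [|x e] He _; [now left|discriminate].
  - destruct (IH (S s)) as [l Hl]. destruct (goodH s) as [[hl Hhl] _].
    exists (flat_map (fun x => map (fun e => x :: e) l) hl).
    intros [|x e] Hlen He; [discriminate|]. apply in_flat_map. exists x. split.
    + apply Hhl. specialize (He 0 x eq_refl). now rewrite Nat.add_0_r in He.
    + apply in_map, Hl; [now injection Hlen|]. intros i y Hy.
      specialize (He (S i) y Hy). now rewrite Nat.add_succ_r in He.
Qed.

Lemma PT_level_finite L : exists l : list (list T),
  forall q e, PT H q -> q e -> length e = L -> In e l.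
Proof.
  destruct (H_sequences_finite L 0) as [l Hl]. exists l. intros q e (_ & _ & HB & _) He HL.
  apply Hl; [easy|]. intros i x Hx. exact (HB e He i x Hx).
Qed.

End Levels.

Section Forcing.

Context {T : Type} (H : nat -> T -> Prop) (X : nat -> (list T -> Prop) -> Prop).

Definition forces_lit (t : bool) (q : list T -> Prop) (n : nat) : Prop :=
  if t then forces_in H q X n else forces_notin H q X n.

Lemma forces_lit_mono t (q1 q2 : list T -> Prop) n :
  stronger q1 q2 -> forces_lit t q2 n -> forces_lit t q1 n.
Proof.
  intros S12. destruct t; simpl.
  - intros F q' P Sq'. exact (F q' P (stronger_trans _ _ _ Sq' S12)).
  - intros F r Xr [s (Ps & S1 & S2)]. apply (F r Xr). exists s.
    split; [easy|split; [exact (stronger_trans _ _ _ S1 S12)|easy]].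
Qed.

Hypothesis goodH : good_H H.

(* Every extension of q has an extension below some subtree q^[e] with |e| = L. *)
Lemma forces_lit_by_level t (q : list T -> Prop) L n : PT H q ->
  (forall e, q e -> length e = L -> forces_lit t (subtree q e) n) -> forces_lit t q n.
Proof.
  intros P F. destruct t; simpl in *.
  - intros q' P' S'. destruct (PT_level H goodH q' L P') as [e [He HL]].
    destruct (F e (S' e He) HL (subtree q' e)) as [r [Xr [s (Ps & S1 & S2)]]].
    + now apply subtree_PT.
    + now apply subtree_mono.
    + exists r. split; [easy|]. exists s. split; [easy|split; [|easy]].
      eapply stronger_trans; [exact S1|apply subtree_stronger].
  - intros r Xr [s (Ps & S1 & S2)]. destruct (PT_level H goodH s L Ps) as [e [He HL]].
    apply (F e (S1 e He) HL r Xr). exists (subtree s e). split; [|split].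
    + now apply subtree_PT.
    + now apply subtree_mono.
    + eapply stronger_trans; [apply subtree_stronger|exact S2].
Qed.

Lemma PT_decides (c : list T -> Prop) n : PT H c ->
  exists c', PT H c' /\ stronger c' c /\ (forces_lit true c' n \/ forces_lit false c' n).
Proof.
  intros Pc. destruct (classic (exists r, X n r /\ compatible H c r))
    as [[r [Xr [s (Ps & S1 & S2)]]]|No].
  - exists s. split; [easy|split; [easy|]]. left. intros q' Pq' Sq'. exists r. split; [easy|].
    exists q'. split; [easy|split; [now intros e|exact (stronger_trans _ _ _ Sq' S2)]].
  - exists c. split; [easy|split; [now intros e|]]. right. intros r Xr Hc. apply No. eauto.
Qed.

Variable U : nset -> Prop.

Definition good (t : bool) (r : list T -> Prop) : Prop :=
  exists W, U W /\ forall N, exists r', PT H r' /\ stronger r' r /\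
    forall n, n < N -> W n -> forces_lit t r' n.

Lemma good_mono t (r1 r2 : list T -> Prop) : stronger r1 r2 -> good t r1 -> good t r2.
Proof.
  intros S [W [UW HW]]. exists W. split; [easy|]. intros N.
  destruct (HW N) as [r' (P' & S' & F')].
  exists r'. split; [easy|split; [exact (stronger_trans _ _ _ S' S)|easy]].
Qed.

Hypothesis HU : ultrafilter U.

Lemma deciding_sequence (r : list T -> Prop) : PT H r ->
  exists ch : nat -> list T -> Prop, forall N, PT H (ch N) /\ stronger (ch N) r /\
    (forall n, n < N -> stronger (ch N) (ch (S n))) /\
    (forces_lit true (ch (S N)) N \/ forces_lit false (ch (S N)) N).
Proof.
  intros Pr.
  assert (E : forall cn : (list T -> Prop) * nat, exists c', PT H (fst cn) ->
     PT H c' /\ stronger c' (fst cn) /\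
     (forces_lit true c' (snd cn) \/ forces_lit false c' (snd cn))).
  { intros [c n]. destruct (classic (PT H c)) as [Pc|Pc].
    - destruct (PT_decides c n Pc) as [c' Hc']. now exists c'.
    - exists c. simpl; intros; contradiction. }
  apply choice in E as [f Hf].
  pose (ch := fix ch (n : nat) : list T -> Prop :=
                match n with 0 => r | S m => f (ch m, m) end).
  assert (PTch : forall n, PT H (ch n)).
  { induction n; [easy|]. now apply (Hf (ch n, n)). }
  assert (mono : forall n d, stronger (ch (n + d)) (ch n)).
  { intros n d. induction d as [|d IH].
    - rewrite Nat.add_0_r. now intros e.
    - rewrite Nat.add_succ_r. eapply stronger_trans; [|exact IH]. apply (Hf (_, _) (PTch _)). }
  exists ch. intros N. split; [easy|split; [apply (mono 0 N)|split]].
  - intros n Hn. replace N with (S n + (N - S n)) by lia. apply mono.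
  - apply (Hf (ch N, N) (PTch N)).
Qed.

(* U chooses the majority answer along a deciding sequence. *)
Lemma good_true_or_false (r : list T -> Prop) : PT H r -> good true r \/ good false r.
Proof.
  intros Pr. destruct (deciding_sequence r Pr) as [ch Hch].
  destruct HU as (_ & _ & _ & Hu).
  destruct (Hu (fun n => forces_lit true (ch (S n)) n)) as [UD|UD]; [left|right];
    (eexists; split; [exact UD|]); intros N; exists (ch N);
    destruct (Hch N) as (PN & SN & below & _); (split; [easy|split; [easy|]]);
    intros n Hn Dn; apply forces_lit_mono with (q2 := ch (S n)); auto.
  now destruct (Hch n) as (_ & _ & _ & [D|D]).
Qed.

Lemma good_dense_below (p : list T -> Prop) : PT H p ->
  exists t p0, PT H p0 /\ stronger p0 p /\
    forall r, PT H r -> stronger r p0 -> good t r.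
Proof.
  intros Pp. destruct (classic (forall r, PT H r -> stronger r p -> good true r)) as [A|A].
  - exists true, p. split; [easy|split; [now intros e|easy]].
  - apply not_all_ex_not in A as [r A].
    apply imply_to_and in A as [Pr A]. apply imply_to_and in A as [Sr A].
    exists false, r. split; [easy|split; [easy|]]. intros r' Pr' Sr'.
    destruct (good_true_or_false r' Pr') as [B|B]; [|easy].
    exfalso. apply A. eapply good_mono; eauto.
Qed.

End Forcing.

Section Fusion.

Context {T : Type} (H : nat -> T -> Prop).
Hypothesis goodH : good_H H.

Record fusion_step (q : list T -> Prop) (L : nat) (q' : list T -> Prop) (L' : nat) : Prop := {
  fusion_PT : PT H q';
  fusion_stronger : stronger q' q;
  fusion_agree : forall v, length v <= L -> (q' v <-> q v);
  fusion_level_lt : L < L';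
  fusion_splits : forall e, q' e -> length e = L ->
    exists k, q' (e ++ k) /\ full_split H q' (e ++ k) /\ length (e ++ k) < L' }.

Section Fusion_sequence.

Variables (qs : nat -> list T -> Prop) (Ls : nat -> nat).
Hypothesis PT0 : PT H (qs 0).
Hypothesis steps : forall k, fusion_step (qs k) (Ls k) (qs (S k)) (Ls (S k)).

Definition fusion_limit : list T -> Prop := fun v => forall k, qs k v.

Lemma fusion_sequence_PT k : PT H (qs k).
Proof. destruct k; [easy|]. apply (fusion_PT _ _ _ _ (steps k)). Qed.

Lemma fusion_sequence_decreasing j d : stronger (qs (j + d)) (qs j).
Proof.
  induction d as [|d IH]; [rewrite Nat.add_0_r; now intros v|].
  rewrite Nat.add_succ_r. eapply stronger_trans; [|exact IH].
  apply (fusion_stronger _ _ _ _ (steps _)).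
Qed.

Lemma fusion_levels_increase k d : Ls k + d <= Ls (k + d).
Proof.
  induction d as [|d IH]; [rewrite !Nat.add_0_r; lia|].
  replace (k + S d) with (S (k + d)) by lia.
  pose proof (fusion_level_lt _ _ _ _ (steps (k + d))). lia.
Qed.

Lemma fusion_sequence_agree k d v : length v <= Ls k -> (qs (k + d) v <-> qs k v).
Proof.
  intros Hv. induction d as [|d IH]; [now rewrite Nat.add_0_r|].
  rewrite Nat.add_succ_r, <- IH. apply (fusion_agree _ _ _ _ (steps _)).
  pose proof (fusion_levels_increase k d). lia.
Qed.

Lemma fusion_limit_iff k v : length v <= Ls k -> (fusion_limit v <-> qs k v).
Proof.
  intros Hv. split; [easy|]. intros Hk j. destruct (Nat.le_ge_cases j k) as [Hj|Hj].
  - replace k with (j + (k - j)) in Hk by lia. now apply fusion_sequence_decreasing in Hk.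
  - replace j with (k + (j - k)) by lia. now apply fusion_sequence_agree.
Qed.

Lemma full_split_fusion_limit k v :
  length v < Ls k -> full_split H (qs k) v -> full_split H fusion_limit v.
Proof.
  intros Hv Hf i. rewrite (fusion_limit_iff k); [apply Hf|]. rewrite length_app. simpl. lia.
Qed.

Lemma fusion_limit_stronger k : stronger fusion_limit (qs k).
Proof. now intros v Hv. Qed.

Lemma fusion_limit_PT : PT H fusion_limit.
Proof.
  assert (Lge : forall k, k <= Ls k).
  { intros k. pose proof (fusion_levels_increase 0 k). simpl in *. lia. }
  split; [|split; [|split; [|split]]].
  - exists []. intros k. apply PT_nil with H, fusion_sequence_PT.
  - intros a b Hab k. eapply PT_prefix_closed;
      [apply fusion_sequence_PT|apply (Hab k)|apply is_prefix_app].
  - intros v Hv. destruct PT0 as (_ & _ & HB & _). exact (HB v (Hv 0)).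
  - intros v Hv. set (k := S (length v)).
    assert (Hl : length v < Ls k) by (pose proof (Lge k); unfold k in *; lia).
    destruct (fusion_sequence_PT k) as (_ & _ & _ & HC & _).
    destruct (HC v (Hv k)) as [[i [Hi Hu]]|Hf].
    + left. exists i. split.
      * apply (fusion_limit_iff k); [rewrite length_app; simpl; lia|easy].
      * intros j Hj. apply Hu, Hj.
    + right. eapply full_split_fusion_limit; eauto.
  - intros v Hv. set (k := length v).
    destruct (PT_extend H goodH (qs (S k)) v (fusion_sequence_PT (S k)) (Hv (S k))
      (Ls k - length v)) as [d [Hd Hdl]].
    destruct (fusion_splits _ _ _ _ (steps k) (v ++ d) Hd) as (kk & Hk1 & Hk2 & Hk3).
    { pose proof (Lge k). rewrite length_app. unfold k in *. lia. }
    exists (d ++ kk). rewrite app_assoc. split.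
    + apply (fusion_limit_iff (S k)); [lia|easy].
    + eapply full_split_fusion_limit; eauto.
Qed.

End Fusion_sequence.

End Fusion.

Section Glue.

Context {T : Type} (H : nat -> T -> Prop).
Hypothesis goodH : good_H H.

Variables (q : list T -> Prop) (L : nat) (R : list T -> list T -> Prop).
Hypothesis Pq : PT H q.
Hypothesis PT_R : forall e, q e -> length e = L -> PT H (R e).
Hypothesis R_below : forall e, q e -> length e = L -> stronger (R e) (subtree q e).

(* q with each subtree q^[e], |e| = L, replaced by R e *)
Definition glue : list T -> Prop := fun v => q v /\ (length v <= L \/ R (firstn L v) v).

Lemma patch_root e : q e -> length e = L -> R e e.
Proof. intros He HL. eapply PT_below_subtree_contains; eauto. Qed.

Lemma patch_in_q e v : q e -> length e = L -> R e v -> q v.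
Proof. intros He HL Hv. exact (subtree_stronger q e v (R_below e He HL v Hv)). Qed.

Lemma glue_low v : length v <= L -> (glue v <-> q v).
Proof. intros Hv. split; [now intros [? _]|]. intros Hq. split; [easy|now left]. Qed.

Lemma glue_high v : L <= length v -> q (firstn L v) -> (glue v <-> R (firstn L v) v).
Proof.
  intros Hv Hf. split.
  - intros [Hq [Hl|Hr]]; [|easy]. rewrite firstn_all2 by lia. apply patch_root; [easy|lia].
  - intros Hr. split; [|now right]. eapply patch_in_q; eauto using firstn_length_le.
Qed.

Lemma glue_succ_high v i : L <= length v -> q (firstn L v) ->
  (glue (v ++ [i]) <-> R (firstn L v) (v ++ [i])).
Proof.
  intros Hv Hf. rewrite <- (firstn_app_short L v [i]) by easy. apply glue_high.
  - rewrite length_app. lia.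
  - now rewrite firstn_app_short.
Qed.

Lemma glue_succ_low v i : length v < L -> (glue (v ++ [i]) <-> q (v ++ [i])).
Proof. intros Hv. apply glue_low. rewrite length_app. simpl. lia. Qed.

Lemma glue_prefix_closed a b : glue (a ++ b) -> glue a.
Proof.
  intros [Hab C]. pose proof (PT_prefix_closed H q a _ Pq Hab (is_prefix_app a b)) as Ha.
  split; [easy|]. destruct (le_lt_dec (length a) L) as [l|l]; [now left|right].
  destruct C as [C|C]; [rewrite length_app in C; lia|].
  rewrite firstn_app_short in C by lia.
  eapply PT_prefix_closed; [apply PT_R|exact C|apply is_prefix_app].
  - now apply (PT_firstn H).
  - apply firstn_length_le. lia.
Qed.

Lemma glue_splits_high v : glue v -> L <= length v ->
  exists k, glue (v ++ k) /\ full_split H glue (v ++ k).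
Proof.
  intros Hv Hl. pose proof (PT_firstn H q L v Pq (proj1 Hv)) as Hf.
  destruct (PT_R _ Hf (firstn_length_le v Hl)) as (_ & _ & _ & _ & HD).
  destruct (HD v (proj1 (glue_high v Hl Hf) Hv)) as [k [Hk Hfk]]. exists k.
  assert (Hl2 : L <= length (v ++ k)) by (rewrite length_app; lia).
  assert (Hf2 : firstn L (v ++ k) = firstn L v) by (now apply firstn_app_short).
  split.
  - apply glue_high; try rewrite Hf2; easy.
  - intros i. rewrite glue_succ_high by (try rewrite Hf2; easy). rewrite Hf2. apply Hfk.
Qed.

Lemma glue_PT : PT H glue.
Proof.
  pose proof Pq as (_ & _ & HBq & HCq & _).
  split; [|split; [|split; [|split]]].
  - exists []. split; [now apply PT_nil with H|left; simpl; lia].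
  - exact glue_prefix_closed.
  - intros v [Hv _]. now apply HBq.
  - intros v [Hv C]. destruct (lt_dec (length v) L) as [l|l].
    + destruct (HCq v Hv) as [[i [Hi Hu]]|Hfs].
      * left. exists i. split; [exact (proj2 (glue_succ_low v i l) Hi)|].
        intros j Hj. exact (Hu j (proj1 (glue_succ_low v j l) Hj)).
      * right. intros i. rewrite glue_succ_low; auto.
    + assert (Hl : L <= length v) by lia. pose proof (PT_firstn H q L v Pq Hv) as Hf.
      destruct (PT_R _ Hf (firstn_length_le v Hl)) as (_ & _ & _ & HCR & _).
      destruct (HCR v (proj1 (glue_high v Hl Hf) (conj Hv C))) as [[i [Hi Hu]]|Hfs].
      * left. exists i. split; [exact (proj2 (glue_succ_high v i Hl Hf) Hi)|].
        intros j Hj. exact (Hu j (proj1 (glue_succ_high v j Hl Hf) Hj)).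
      * right. intros i. rewrite glue_succ_high; auto.
  - intros v Hv. destruct (le_lt_dec L (length v)) as [l|l]; [now apply glue_splits_high|].
    destruct (PT_extend H goodH q v Pq (proj1 Hv) (L - length v)) as [d [Hd Hdl]].
    destruct (glue_splits_high (v ++ d)) as [k [Hk1 Hk2]].
    + apply glue_low; [rewrite length_app; lia|easy].
    + rewrite length_app. lia.
    + exists (d ++ k). now rewrite app_assoc.
Qed.

Lemma glue_fusion_step : exists L', fusion_step H q L glue L'.
Proof.
  destruct (PT_level_finite H goodH L) as [l Hl].
  destruct (list_bound (fun e => glue e /\ length e = L)
    (fun e m => exists k, glue (e ++ k) /\ full_split H glue (e ++ k) /\ length (e ++ k) = m)
    ) with (l := l) as [M HM].
  { intros e [He HL]. destruct (glue_splits_high e He) as [k [Hk1 Hk2]]; [lia|].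
    now exists (length (e ++ k)), k. }
  exists (S (L + M)). constructor.
  - exact glue_PT.
  - now intros v [Hv _].
  - exact glue_low.
  - lia.
  - intros e He HL. destruct (HM e (Hl _ e glue_PT He HL) (conj He HL))
      as (m & Hm & k & Hk1 & Hk2 & Hk3).
    exists k. split; [easy|split; [easy|lia]].
Qed.

Lemma glue_subtree e : q e -> length e = L -> stronger (subtree glue e) (R e).
Proof.
  intros Hqe HL m [Hm [C|C]].
  - eapply PT_prefix_closed; [now apply PT_R|now apply patch_root|exact C].
  - assert (Fm : firstn L m = e) by (rewrite <- HL; now apply is_prefix_firstn).
    rewrite <- Fm. apply glue_high; [rewrite <- HL; now apply is_prefix_length|congruence|easy].
Qed.

End Glue.

Section Strategy.

Context {T : Type} (H : nat -> T -> Prop) (X : nat -> (list T -> Prop) -> Prop).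
Variables (U : nset -> Prop) (t : bool) (p0 : list T -> Prop).
Hypothesis goodH : good_H H.
Hypothesis HU : ultrafilter U.
Hypothesis all_good : forall r, PT H r -> stronger r p0 -> good H X U t r.

(* Glue witnesses of goodness over the finitely many level-L nodes. *)
Lemma fusion_step_good q L : PT H q -> stronger q p0 ->
  exists W, U W /\ forall N, exists q' L', fusion_step H q L q' L' /\
     forall n, n < N -> W n -> forces_lit H X t q' n.
Proof.
  intros Pq Sq.
  assert (E1 : forall e, exists W, q e /\ length e = L -> U W /\ forall N, exists r,
     PT H r /\ stronger r (subtree q e) /\ forall n, n < N -> W n -> forces_lit H X t r n).
  { intros e. destruct (classic (q e /\ length e = L)) as [[He HL]|Hn].
    - destruct (all_good (subtree q e)) as [W HW].
      + now apply subtree_PT.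
      + eapply stronger_trans; [apply subtree_stronger|exact Sq].
      + now exists W.
    - exists (fun _ => True). intros c; contradiction. }
  apply choice in E1 as [Wf HWf].
  exists (fun n => forall e, q e -> length e = L -> Wf e n). split.
  { destruct (PT_level_finite H goodH L) as [l Hl].
    pose proof (ultrafilter_finite_meet U HU (fun e => q e /\ length e = L) Wf
      (fun e c => proj1 (HWf e c)) l) as Ul.
    destruct HU as [Hup _]. eapply Hup; [exact Ul|]. intros n Hn e He HL.
    apply Hn; [exact (Hl q e Pq He HL)|easy]. }
  intros N.
  assert (E2 : forall e, exists r, q e /\ length e = L -> PT H r /\
     stronger r (subtree q e) /\ forall n, n < N -> Wf e n -> forces_lit H X t r n).
  { intros e. destruct (classic (q e /\ length e = L)) as [c|c].
    - destruct (proj2 (HWf e c) N) as [r Hr]. now exists r.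
    - exists q. intros; contradiction. }
  apply choice in E2 as [R HR].
  destruct (glue_fusion_step H goodH q L R Pq) as [L' HL'];
    try (intros e He HL; now apply (HR e (conj He HL))).
  exists (glue q L R), L'. split; [easy|]. intros n Hn Wn.
  apply (forces_lit_by_level H X goodH t _ L n (fusion_PT _ _ _ _ _ HL')).
  intros e He HL. pose proof (proj1 He) as Hqe.
  destruct (HR e (conj Hqe HL)) as (_ & _ & HF).
  apply forces_lit_mono with (q2 := R e); [|now apply HF, Wn].
  apply (glue_subtree H); try easy; intros e' He' HLe'; now apply (HR e' (conj He' HLe')).
Qed.

Definition below_p0 (s : (list T -> Prop) * nat) : Prop := PT H (fst s) /\ stronger (fst s) p0.

Lemma fusion_strategy : exists (W : (list T -> Prop) * nat -> nset)
  (step : (list T -> Prop) * nat -> nat -> (list T -> Prop) * nat),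
  forall s, below_p0 s -> U (W s) /\ forall N,
    fusion_step H (fst s) (snd s) (fst (step s N)) (snd (step s N)) /\
    forall n, n < N -> W s n -> forces_lit H X t (fst (step s N)) n.
Proof.
  assert (E : forall s, exists Wg : nset * (nat -> (list T -> Prop) * nat), below_p0 s ->
    U (fst Wg) /\ forall N, fusion_step H (fst s) (snd s) (fst (snd Wg N)) (snd (snd Wg N)) /\
      forall n, n < N -> fst Wg n -> forces_lit H X t (fst (snd Wg N)) n).
  { intros [q L]. destruct (classic (below_p0 (q, L))) as [[Pq Sq]|No].
    - destruct (fusion_step_good q L Pq Sq) as [W [UW HW]].
      assert (G : forall N, exists s', fusion_step H q L (fst s') (snd s') /\
        forall n, n < N -> W n -> forces_lit H X t (fst s') n).
      { intros N. destruct (HW N) as (q' & L' & HS). now exists (q', L'). }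
      apply choice in G as [g Hg]. now exists (W, g).
    - exists ((fun _ => True), fun _ => (q, L)). intros c; contradiction. }
  apply choice in E as [f Hf].
  exists (fun s => fst (f s)), (fun s => snd (f s)). exact Hf.
Qed.

Section Run.

Variables (W : (list T -> Prop) * nat -> nset)
  (step : (list T -> Prop) * nat -> nat -> (list T -> Prop) * nat).
Hypothesis step_spec : forall s, below_p0 s -> U (W s) /\ forall N,
  fusion_step H (fst s) (snd s) (fst (step s N)) (snd (step s N)) /\
  forall n, n < N -> W s n -> forces_lit H X t (fst (step s N)) n.
Hypothesis Pp0 : PT H p0.

Definition run (h : list nat) : (list T -> Prop) * nat := fold_left step h (p0, 0).

Lemma step_below_p0 s N : below_p0 s -> below_p0 (step s N).
Proof.
  intros Hs. destruct (proj2 (step_spec s Hs) N) as [F _]. split.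
  - exact (fusion_PT _ _ _ _ _ F).
  - eapply stronger_trans; [exact (fusion_stronger _ _ _ _ _ F)|apply Hs].
Qed.

Lemma run_below_p0 h : below_p0 (run h).
Proof.
  unfold run. assert (Init : below_p0 (p0, 0)) by (split; [easy|now intros v]).
  revert Init. generalize (p0, 0). induction h as [|N h IH]; intros s Hs; [easy|].
  apply IH, step_below_p0, Hs.
Qed.

Lemma run_W_in_U h : U (W (run h)).
Proof. exact (proj1 (step_spec _ (run_below_p0 h))). Qed.

Lemma fusion_along (hs : nat -> list nat) (Ns : nat -> nat) :
  (forall k, hs (S k) = hs k ++ [Ns k]) ->
  exists q, PT H q /\ stronger q p0 /\
    forall n k, n < Ns k -> W (run (hs k)) n -> forces_lit H X t q n.
Proof.
  intros Hhs.
  assert (Hrun : forall k, run (hs (S k)) = step (run (hs k)) (Ns k)).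
  { intros k. unfold run. now rewrite Hhs, fold_left_app. }
  set (qs := fun k => fst (run (hs k))).
  assert (steps : forall k, fusion_step H (qs k) (snd (run (hs k))) (qs (S k))
                            (snd (run (hs (S k))))).
  { intros k. unfold qs. rewrite Hrun. apply (step_spec _ (run_below_p0 _)). }
  exists (fusion_limit qs). split; [|split].
  - apply (fusion_limit_PT H goodH qs _ (proj1 (run_below_p0 _)) steps).
  - eapply stronger_trans; [apply (fusion_limit_stronger qs 0)|apply run_below_p0].
  - intros n k Hn Hw. apply forces_lit_mono with (q2 := qs (S k));
      [apply fusion_limit_stronger|].
    unfold qs. rewrite Hrun. now apply (step_spec _ (run_below_p0 _)).
Qed.

End Run.

End Strategy.

Fixpoint list_code (h : list nat) : nat :=
  match h with [] => 0 | a :: h' => S (Cantor.to_nat (a, list_code h')) end.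

Lemma list_code_injective h h' : list_code h = list_code h' -> h = h'.
Proof.
  revert h'. induction h as [|a h IH]; intros [|a' h'] E; try discriminate; [easy|].
  assert (E' : (a, list_code h) = (a', list_code h')).
  { rewrite <- (Cantor.cancel_of_to (a, _)), <- (Cantor.cancel_of_to (a', _)).
    f_equal. exact (Nat.succ_inj _ _ E). }
  injection E' as -> E'. now rewrite (IH h' E').
Qed.

Section P_points.

Variable U : nset -> Prop.
Hypothesis HPP : P_point U.

Lemma P_point_injective_family {I : Type} (code : I -> nat) :
  (forall i j, code i = code j -> i = j) ->
  forall W : I -> nset, (forall i, U (W i)) -> exists A, U A /\ forall i, almost_sub A (W i).
Proof.
  intros Hcode W UW. destruct HPP as [HU Hp]. pose proof HU as [Hup _].
  destruct (Hp (fun n k => forall i, code i = n -> W i k)) as [A [UA HA]].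
  - intros n. destruct (classic (exists i, code i = n)) as [[i <-]|No].
    + eapply Hup; [exact (UW i)|]. intros k Hk j Hj. now rewrite (Hcode j i Hj).
    + eapply Hup; [exact (ultrafilter_full U HU)|]. intros k _ i Hi. exfalso. eauto.
  - exists A. split; [easy|]. intros i. destruct (HA (code i)) as [m Hm].
    exists m. intros k Hk Ak. now apply (Hm k Hk Ak).
Qed.

Section Zigzag.

Variable m : list nat -> nat.

(* Two histories built in alternation: the cut-offs appended to one are chosen above the
   threshold m of the other, so that their intervals tile [m [], ∞). *)
Fixpoint zigzag (k : nat) : list nat * list nat * nat :=
  match k with
  | 0 => ([], [], m [])
  | S k => let '(h0, h1, c) := zigzag k in
           let d := Nat.max (S c) (m h1) in
           let c' := Nat.max (S d) (m (h0 ++ [d])) in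
           (h0 ++ [d], h1 ++ [c'], c')
  end.

Definition hist0 k := fst (fst (zigzag k)).
Definition hist1 k := snd (fst (zigzag k)).
Definition start k := snd (zigzag k).
Definition cut0 k := Nat.max (S (start k)) (m (hist1 k)).
Definition cut1 k := Nat.max (S (cut0 k)) (m (hist0 (S k))).

Lemma zigzag_S k : hist0 (S k) = hist0 k ++ [cut0 k] /\
  hist1 (S k) = hist1 k ++ [cut1 k] /\ start (S k) = cut1 k.
Proof.
  unfold cut1, cut0, hist0, hist1, start. cbn [zigzag].
  destruct (zigzag k) as [[h0 h1] c]. cbn -[Nat.max]. auto.
Qed.

Lemma zigzag_bounds k : m (hist0 k) <= start k /\ start k < cut0 k /\
  m (hist1 k) <= cut0 k /\ cut0 k < cut1 k /\ k <= start k.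
Proof.
  induction k as [|k IH].
  - unfold cut1, cut0, start, hist0, hist1. cbn -[Nat.max]. lia.
  - destruct (zigzag_S k) as (_ & _ & E). unfold cut1, cut0 in *. rewrite E. lia.
Qed.

Lemma zigzag_cover (W : list nat -> nset) (A : nset) :
  (forall h k, m h <= k -> A k -> W h k) ->
  forall n, A n -> W [] n ->
    (exists k, n < cut0 k /\ W (hist0 k) n) \/ (exists k, n < cut1 k /\ W (hist1 k) n).
Proof.
  intros Hm n An Wn.
  assert (HK : forall K, n < start K -> (exists k, n < cut0 k /\ W (hist0 k) n) \/
                                        (exists k, n < cut1 k /\ W (hist1 k) n)).
  { induction K as [|K IH]; intros Hn.
    - left. exists 0. split; [pose proof (zigzag_bounds 0); lia|exact Wn].
    - destruct (lt_dec n (start K)) as [l|l]; [now apply IH|].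
      pose proof (zigzag_bounds K) as B. destruct (zigzag_S K) as (_ & _ & E).
      destruct (lt_dec n (cut0 K)) as [l2|l2].
      + left. exists K. split; [easy|]. apply Hm; [lia|easy].
      + right. exists K. split; [lia|]. apply Hm; [lia|easy]. }
  apply (HK (S n)). pose proof (zigzag_bounds (S n)). lia.
Qed.

End Zigzag.

(* Each W (hs k) may depend on all earlier cut-offs, hence the need for A ⊆* W h for every
   finite history h at once. *)
Lemma P_point_diagonal (W : list nat -> nset) : (forall h, U (W h)) ->
  exists (hs : nat -> list nat) (Ns : nat -> nat) (u : nset), U u /\
    (forall k, hs (S k) = hs k ++ [Ns k]) /\
    (forall n, u n -> exists k, n < Ns k /\ W (hs k) n).
Proof.
  intros UW.
  destruct (P_point_injective_family list_code list_code_injective W UW) as [A [UA HA]].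
  apply choice in HA as [m Hm].
  pose proof HPP as [(Hup & Hint & _ & Hu) _].
  set (u0 := fun n => exists k, n < cut0 m k /\ W (hist0 m k) n).
  set (u1 := fun n => exists k, n < cut1 m k /\ W (hist1 m k) n).
  destruct (Hu u0) as [U0|U1].
  - exists (hist0 m), (cut0 m), u0. split; [exact U0|]. split; [|easy].
    intros k. apply zigzag_S.
  - exists (hist1 m), (cut1 m), u1. split.
    + eapply Hup; [exact (Hint _ _ U1 (Hint _ _ UA (UW [])))|].
      intros n (Nu0 & An & Wn).
      destruct (zigzag_cover m W A Hm n An Wn); easy.
    + split; [intros k; apply zigzag_S|easy].
Qed.

End P_points.

Theorem lemma2p22 :
  forall (T : Type) (H : nat -> T -> Prop),
    good_H H ->
    forall U : nset -> Prop, P_point U ->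
    forall (p : list T -> Prop), PT H p ->
    forall X : nat -> (list T -> Prop) -> Prop, nice_name H X ->
      exists q, PT H q /\ stronger q p /\
        exists u, U u /\
          ((forall n, u n -> forces_in H q X n) \/
           (forall n, u n -> forces_notin H q X n)).
Proof.
  (* the argument never uses that the conditions occurring in X are in PT_H *)
  intros T H goodH U HPP p Pp X _.
  pose proof HPP as [HU _].
  destruct (good_dense_below H X U HU p Pp) as (t & p0 & Pp0 & Sp0 & all_good).
  destruct (fusion_strategy H X U t p0 goodH HU all_good) as (W & step & Hstep).
  destruct (P_point_diagonal U HPP (fun h => W (run p0 step h))
    (run_W_in_U H X U t p0 W step Hstep Pp0)) as (hs & Ns & u & Uu & Hhs & Hu).
  destruct (fusion_along H X U t p0 goodH W step Hstep Pp0 hs Ns Hhs) as (q & Pq & Sq & Fq).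
  exists q. split; [easy|split; [exact (stronger_trans _ _ _ Sq Sp0)|]].
  exists u. split; [easy|].
  destruct t; [left|right]; intros n Hn; destruct (Hu n Hn) as (k & Hk & Hw);
    exact (Fq n k Hk Hw).
Qed.
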